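(* Let $\mathbb{F}$ be a field of characteristic $2$. Then the identity matrix $I\in\mathfrak{gl}(n,\mathbb{F})$ can be written as a finite sum of matrices $N\in\mathfrak{gl}(n,\mathbb{F})$ with $N^2=0$ if and only if $n$ is even. *)

From HB Require Import structures.
From mathcomp Require Import all_boot all_order all_algebra.
Set Implicit Arguments. Unset Strict Implicit. Unset Printing Implicit Defensive.
Import GRing.Theory.
Local Open Scope ring_scope.

Definition square_zero (F : fieldType) (n : nat) (N : 'M[F]_n) : bool :=
  N *m N == 0.

From HB Require Import structures.
From mathcomp Require Import all_boot all_order all_algebra.
Set Implicit Arguments.
Unset Strict Implicit.
Unset Printing Implicit Defensive.

Import GRing.Theory.
Local Open Scope ring_scope.

(* A square-zero matrix factors as N = C R with C of full column rank and
   R of full row rank; then C (R C) R = N^2 = 0 forces R C = 0, so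
   tr N = tr (R C) = 0.  Hence a sum of square-zero matrices has trace 0,
   while tr 1 = n, which vanishes in characteristic 2 exactly when n is even.
   Conversely, for n = m + m, in 2 x 2 blocks of size m and characteristic 2,
   1 = [[1, 1], [1, 1]] + [[0, 1], [0, 0]] + [[0, 0], [1, 0]],
   and each summand squares to zero. *)

Section SquareZero.

Variable F : fieldType.

Lemma mxtrace_square_zero n (N : 'M[F]_n) : square_zero N -> \tr N = 0.
Proof.
move/eqP=> NN; rewrite -(mulmx_base N) mxtrace_mulC.
suff -> : row_base N *m col_base N = 0 by rewrite mxtrace0.
apply: (row_full_inj (col_base_full N)).
apply: (row_free_inj (row_base_free N)).
by rewrite mulmx0 mul0mx -mulmxA -[in LHS]mulmxA mulmxA mulmx_base NN.
Qed.

Lemma mxtrace_sum_square_zero n (s : seq 'M[F]_n) :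
  all (@square_zero F n) s -> \tr (\sum_(N <- s) N) = 0.
Proof.
move/allP=> s_sqz; rewrite raddf_sum big_seq big1 // => N /s_sqz.
exact: mxtrace_square_zero.
Qed.

Lemma square_zero_block_ur m1 m2 (A : 'M[F]_(m1, m2)) :
  square_zero (block_mx 0 A 0 0).
Proof.
by rewrite /square_zero mulmx_block !(mul0mx, mulmx0, addr0) block_mx0.
Qed.

Lemma square_zero_block_dl m1 m2 (A : 'M[F]_(m2, m1)) :
  square_zero (block_mx 0 0 A 0).
Proof.
by rewrite /square_zero mulmx_block !(mul0mx, mulmx0, addr0) block_mx0.
Qed.

Variable charF2 : (2 \in [pchar F])%N.

Lemma addmx_pchar2 m n (A : 'M[F]_(m, n)) : A + A = 0.
Proof. by rewrite -mulr2n -scaler_nat (pcharf0 charF2) scale0r. Qed.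

Lemma square_zero_block_const m (A : 'M[F]_m) :
  square_zero (block_mx A A A A).
Proof. by rewrite /square_zero mulmx_block !addmx_pchar2 block_mx0. Qed.

Lemma sum_square_zero_eq1_double m :
  exists s : seq 'M[F]_(m + m),
    all (@square_zero F _) s /\ \sum_(N <- s) N = 1%:M.
Proof.
exists [:: block_mx 1%:M 1%:M 1%:M 1%:M; block_mx 0 1%:M 0 0;
           block_mx 0 0 1%:M 0].
split; first by rewrite /= square_zero_block_const square_zero_block_ur
  square_zero_block_dl.
rewrite !big_cons big_nil addr0 !add_block_mx !(addr0, add0r) !addmx_pchar2.
by rewrite scalar_mx_block.
Qed.

End SquareZero.

Theorem corollary2 (F : fieldType) (charF2 : (2 \in [pchar F])%N) (n : nat) :
  (exists s : seq 'M[F]_n,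
      all (@square_zero F n) s /\ \sum_(N <- s) N = 1%:M)
  <-> ~~ odd n.
Proof.
split=> [[s [s_sqz s_sum]] | n_even].
  have := mxtrace_sum_square_zero s_sqz.
  by rewrite s_sum mxtrace1 => /eqP; rewrite -(dvdn_pcharf charF2) dvdn2.
have -> : n = (n./2 + n./2)%N.
  by rewrite addnn -{1}(odd_double_half n) (negbTE n_even).
exact: sum_square_zero_eq1_double.
Qed.
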